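(* Let $R$ be a commutative ring. The flat topology and the Zariski topology on $\mathrm{Spec}(R)$ coincide if and only if every prime ideal of $R$ is maximal.
   Context: The flat topology on $\mathrm{Spec}(R)$ is the topology having as a basis of open sets the sets $V(I)=\{\mathfrak p\in\mathrm{Spec}(R):I\subseteq\mathfrak p\}$ with $I$ ranging over finitely generated ideals of $R$ (Hochster's inverse topology). *)

From HB Require Import structures.
From mathcomp Require Import all_boot all_order all_algebra.
Set Implicit Arguments. Unset Strict Implicit. Unset Printing Implicit Defensive.
Import GRing.Theory.
Local Open Scope ring_scope.

Definition is_ideal (R : comPzRingType) (I : R -> Prop) : Prop :=
  [/\ I 0, (forall x y, I x -> I y -> I (x + y))
    & (forall r x, I x -> I (r * x))].

Definition prime_ideal (R : comPzRingType) (P : R -> Prop) : Prop :=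
  [/\ is_ideal P, ~ P 1 & (forall x y, P (x * y) -> P x \/ P y)].

Definition maximal_ideal (R : comPzRingType) (M : R -> Prop) : Prop :=
  [/\ is_ideal M, ~ M 1 &
     (forall J : R -> Prop, is_ideal J -> (forall x, M x -> J x) ->
        (forall x, J x <-> M x) \/ J 1)].

Definition ideal_gen (R : comPzRingType) (s : seq R) : R -> Prop :=
  fun x => exists c : seq R, x = \sum_(i < size s) c`_i * s`_i.

Definition fg_ideal (R : comPzRingType) (I : R -> Prop) : Prop :=
  exists s : seq R, forall x, I x <-> ideal_gen s x.

Definition Spec (R : comPzRingType) := {p : R -> Prop | prime_ideal p}.

Definition V (R : comPzRingType) (S : R -> Prop) : Spec R -> Prop :=
  fun p => forall x, S x -> proj1_sig p x.

Definition zariski_open (R : comPzRingType) (U : Spec R -> Prop) : Prop :=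
  exists S : R -> Prop, forall p, U p <-> ~ V S p.

Definition flat_open (R : comPzRingType) (U : Spec R -> Prop) : Prop :=
  forall p, U p -> exists I : R -> Prop,
    [/\ is_ideal I, fg_ideal I, V I p & forall q, V I q -> U q].

(* By Zorn's lemma, an ideal disjoint from a multiplicative set lies in a prime disjoint from it.
   If the topologies agree and x lies in a proper ideal J above a prime P but not in P, the
   Zariski open set D(x) = {q | x \notin q} contains P, hence contains V(I) for some ideal I of P;
   but I + (x) lies in J, so in some prime, which is a point of V(I) outside D(x).
   Conversely, let all primes be maximal.  For s outside P, P + (s) = R gives 1 = a + r s with a
   in P, and V(a) is a flat neighbourhood of P inside D(s).  Every prime q is also minimal, so
   each a in q satisfies t a^n = 0 for some t outside q; applied to generators of a finitely
   generated I in q this yields s outside q with D(s) inside V(I), so every flat open set is a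
   union of sets D(s). *)
From mathcomp Require Import all_boot all_order all_algebra.
From mathcomp Require Import ring.
From mathcomp Require Import boolp classical_sets.
Set Implicit Arguments. Unset Strict Implicit. Unset Printing Implicit Defensive.
Import GRing.Theory.
Local Open Scope classical_set_scope.
Local Open Scope ring_scope.

Section Ideals.
Variable R : comPzRingType.
Implicit Types (I J P Q : R -> Prop) (s : seq R).

Lemma prime_idealX P a n : prime_ideal P -> P (a ^+ n) -> P a.
Proof.
case=> _ P1 Pmul; elim: n => [|n IHn]; first by rewrite expr0 => /P1.
by rewrite exprS => /Pmul [].
Qed.

Lemma prime_idealNM P a b : prime_ideal P -> ~ P a -> ~ P b -> ~ P (a * b).
Proof. by case=> _ _ Pmul Pa Pb /Pmul []. Qed.

Lemma ideal_mulr I x r : is_ideal I -> I x -> I (x * r).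
Proof. by case=> _ _ Imul Ix; rewrite mulrC; apply: Imul. Qed.

Definition ideal_adjoin I x : R -> Prop := fun z => exists a r, I a /\ z = a + r * x.

Lemma ideal_adjoin_ideal I x : is_ideal I -> is_ideal (ideal_adjoin I x).
Proof.
case=> I0 Iadd Imul; split.
- by exists 0, 0; rewrite mul0r addr0.
- move=> _ _ [a [r [Ia ->]]] [b [r' [Ib ->]]].
  by exists (a + b), (r + r'); split; [exact: Iadd | ring].
- move=> r' _ [a [r [Ia ->]]].
  by exists (r' * a), (r' * r); split; [exact: Imul | ring].
Qed.

Lemma ideal_adjoinl I x z : I z -> ideal_adjoin I x z.
Proof. by move=> Iz; exists z, 0; rewrite mul0r addr0. Qed.

Lemma ideal_adjoinr I x : is_ideal I -> ideal_adjoin I x x.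
Proof. by case=> I0 _ _; exists 0, 1; rewrite mul1r add0r. Qed.

Lemma ideal_adjoin_min I J x :
  is_ideal J -> (forall z, I z -> J z) -> J x -> forall z, ideal_adjoin I x z -> J z.
Proof.
by case=> _ Jadd Jmul IJ Jx _ [a [r [Ia ->]]]; apply: Jadd; [exact: IJ | exact: Jmul].
Qed.

Lemma maximal_ideal_adjoin P x :
  maximal_ideal P -> ~ P x -> exists a r, P a /\ 1 = a + r * x.
Proof.
case=> idealP _ Pmax Px.
have [eq_adjP|[a [r [Pa e1]]]] := Pmax _ (ideal_adjoin_ideal x idealP) (@ideal_adjoinl P x).
  by case: Px; apply/eq_adjP/ideal_adjoinr.
by exists a, r.
Qed.

Lemma ideal_gen_ideal s : is_ideal (ideal_gen s).
Proof.
split.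
- by exists [::]; rewrite big1 // => i _; rewrite nth_nil mul0r.
- move=> _ _ [c ->] [d ->]; exists (mkseq (fun i => c`_i + d`_i) (size s)).
  by rewrite -big_split; apply: eq_bigr => i _; rewrite nth_mkseq // mulrDl.
- move=> r _ [c ->]; exists (mkseq (fun i => r * c`_i) (size s)).
  by rewrite mulr_sumr; apply: eq_bigr => i _; rewrite nth_mkseq // mulrA.
Qed.

Lemma ideal_gen_mem s x : x \in s -> ideal_gen s x.
Proof.
move=> sx; have lt_index : (index x s < size s)%N by rewrite index_mem.
exists (mkseq (fun i => (i == index x s)%:R) (size s)).
rewrite (bigD1 (Ordinal lt_index)) //= nth_mkseq // eqxx mul1r nth_index // big1 ?addr0 //.
move=> i /eqP neq_ik; rewrite nth_mkseq //.
suff /negbTE -> : nat_of_ord i != index x s by rewrite mul0r.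
by apply/eqP => eq_ik; apply: neq_ik; apply: val_inj.
Qed.

Lemma ideal_gen_min s Q : is_ideal Q -> {in s, forall x, Q x} -> forall x, ideal_gen s x -> Q x.
Proof.
case=> Q0 Qadd Qmul sQ _ [c ->].
by apply: (big_ind Q) => // i _; apply/Qmul/sQ/mem_nth.
Qed.

Lemma V_ideal_gen s (p : Spec R) : V (ideal_gen s) p <-> {in s, forall x, proj1_sig p x}.
Proof.
split=> [Vp x /ideal_gen_mem /Vp // |].
by case: (proj2_sig p) => idealp _ _; apply: ideal_gen_min.
Qed.

End Ideals.

Section PrimeAvoidance.
Variables (R : comPzRingType) (J M : R -> Prop).
Hypotheses (idealJ : is_ideal J) (M1 : M 1) (mulM : forall a b, M a -> M b -> M (a * b)).
Hypothesis JM : forall x, J x -> ~ M x.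

Definition avoiding (A : set R) := [/\ is_ideal A, J `<=` A & forall x, A x -> ~ M x].

Lemma bigcup_chain_avoiding (F : set (set R)) :
  (forall X, F X -> X !=set0 -> avoiding X) -> total_on F subset ->
  \bigcup_(X in F) X !=set0 -> avoiding (\bigcup_(X in F) X).
Proof.
move=> Favoid Ftot [x0 [X0 FX0 X0x0]].
have {}Favoid X x : F X -> X x -> avoiding X by move=> FX Xx; apply: Favoid FX _; exists x.
have [_ JX0 _] := Favoid X0 x0 FX0 X0x0.
split; last by move=> x [X FX Xx]; case: (Favoid X x FX Xx) => _ _; apply.
- split; first by exists X0 => //; case: (Favoid X0 x0 FX0 X0x0) => -[].
  + move=> x y [X FX Xx] [Y FY Yy].
    have [XY|YX] := Ftot X Y FX FY.
    * case: (Favoid Y y FY Yy) => [[_ Yadd _] _ _].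
      by exists Y => //; apply: Yadd => //; apply: XY.
    * case: (Favoid X x FX Xx) => [[_ Xadd _] _ _].
      by exists X => //; apply: Xadd => //; apply: YX.
  + move=> r x [X FX Xx]; case: (Favoid X x FX Xx) => [[_ _ Xmul] _ _].
    by exists X => //; apply: Xmul.
- by move=> x Jx; exists X0 => //; apply: JX0.
Qed.

Lemma maximal_avoiding :
  exists A, avoiding A /\ forall B, avoiding B -> A `<=` B -> B `<=` A.
Proof.
have avoidJ : avoiding J by split.
have [A [PA Amax]] : exists A, (A !=set0 -> avoiding A) /\
    forall B, A `<` B -> ~ (B !=set0 -> avoiding B).
  by apply: Zorn_bigcup => F FP Ftot; apply: bigcup_chain_avoiding.
have avoidA : avoiding A.
  apply: PA; apply: contrapT => A0; apply: (Amax J) => //.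
  split; first by move=> x Ax; case: A0; exists x.
  by case: idealJ => J0 _ _ JA; apply: A0; exists 0; apply: JA.
exists A; split => // B avoidB AB; apply: contrapT => BA.
exact: (Amax B (conj AB BA)).
Qed.

Lemma prime_ideal_avoiding : exists Q, prime_ideal Q /\ avoiding Q.
Proof.
have [A [[idealA JA AM] Amax]] := maximal_avoiding.
have meetM x : ~ A x -> exists z, ideal_adjoin A x z /\ M z.
  move=> Ax; apply: contrapT => noM; apply: Ax.
  apply: (Amax (ideal_adjoin A x)); last exact: ideal_adjoinr.
  - split; first exact: ideal_adjoin_ideal.
    + by move=> z /JA; apply: ideal_adjoinl.
    + by move=> z Az Mz; apply: noM; exists z.
  - by move=> z; apply: ideal_adjoinl.
exists A; split; last by split.
split=> //; first by move/AM.
move=> x y Axy; apply: contrapT => /not_orP[Ax Ay].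
have [_ [[a [r [Aa ->]]] Mx]] := meetM x Ax.
have [_ [[b [r' [Ab ->]]] My]] := meetM y Ay.
apply: (AM _ _ (mulM Mx My)); case: idealA => _ Aadd Amul.
have -> : (a + r * x) * (b + r' * y) = (b + r' * y) * a + r * (x * b) + (r * r') * (x * y).
  by ring.
exact: Aadd _ _ (Aadd _ _ (Amul _ _ Aa) (Amul _ _ (Amul _ _ Ab))) (Amul _ _ Axy).
Qed.

End PrimeAvoidance.

Lemma proper_ideal_sub_prime (R : comPzRingType) (J : R -> Prop) :
  is_ideal J -> ~ J 1 -> exists Q, prime_ideal Q /\ forall x, J x -> Q x.
Proof.
move=> idealJ J1.
have [||Q [primeQ [_ JQ _]]] := @prime_ideal_avoiding R J (eq 1) idealJ erefl.
- by move=> _ _ <- <-; rewrite mulr1.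
- by move=> x Jx x1; apply: J1; rewrite x1.
by exists Q.
Qed.

Lemma zariski_flat_prime_maximal (R : comPzRingType) :
  (forall U : Spec R -> Prop, zariski_open U -> flat_open U) ->
  forall P : R -> Prop, prime_ideal P -> maximal_ideal P.
Proof.
move=> zariski_flat P primeP; have [idealP P1 _] := primeP; split=> // J idealJ PJ.
have [J1|J1] := pselect (J 1); [by right | left].
move=> x; split=> [Jx|]; last exact: PJ.
apply: contrapT => Px.
pose D (q : Spec R) := ~ proj1_sig q x.
have openD : zariski_open D.
  exists (fun y => y = x) => q; split=> [Dq Vq | nVq qx]; first exact: Dq (Vq x erefl).
  by apply: nVq => _ ->.
have [I [idealI _ VIP VID]] := zariski_flat D openD (exist _ P primeP) Px.
have IxJ := ideal_adjoin_min idealJ (fun z Iz => PJ z (VIP z Iz)) Jx.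
have [Q [primeQ IxQ]] :=
  proper_ideal_sub_prime (ideal_adjoin_ideal x idealI) (fun h => J1 (IxJ 1 h)).
apply: (VID (exist _ Q primeQ)) => [z Iz|] /=; apply: IxQ.
  exact: ideal_adjoinl.
exact: ideal_adjoinr.
Qed.

Section AllPrimesMaximal.
Variable R : comPzRingType.
Hypothesis all_maximal : forall P : R -> Prop, prime_ideal P -> maximal_ideal P.

Lemma zariski_flat_open (U : Spec R -> Prop) : zariski_open U -> flat_open U.
Proof.
move=> [S US] [p primep] /US /existsNP[s /not_implyP[Ss ps]].
have [a [r [pa e1]]] := maximal_ideal_adjoin (all_maximal primep) ps.
exists (ideal_gen [:: a]); split.
- exact: ideal_gen_ideal.
- by exists [:: a].
- by apply/V_ideal_gen => y; rewrite inE => /eqP ->.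
move=> q /V_ideal_gen qa; apply/US => VSq.
case: (proj2_sig q) => [[_ qadd qmul] q1 _]; apply: q1; rewrite e1.
by apply: qadd; [apply: qa; rewrite inE | apply: qmul; apply: VSq].
Qed.

(* q is also a minimal prime, so the localization at q has a single prime and a is nilpotent there. *)
Lemma prime_mem_annihilated (q : R -> Prop) a :
  prime_ideal q -> q a -> exists t n, ~ q t /\ t * a ^+ n = 0.
Proof.
move=> primeq qa; have [idealq q1 _] := primeq; apply: contrapT => no_annihilator.
pose M z := exists t n, ~ q t /\ z = t * a ^+ n.
have ideal0 : is_ideal (fun z : R => z = 0).
  by split=> // [x y -> ->|r x ->]; rewrite ?addr0 ?mulr0.
have [|||Q [primeQ [_ _ QM]]] := @prime_ideal_avoiding R _ M ideal0.
- by exists 1, 0%N; rewrite expr0 mulr1.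
- move=> _ _ [t [n [qt ->]]] [t' [n' [qt' ->]]]; exists (t * t'), (n + n')%N.
  by split; [exact: prime_idealNM | rewrite exprD; ring].
- by move=> x -> [t [n [qt e]]]; apply: no_annihilator; exists t, n.
have Qq x : Q x -> q x.
  by move=> Qx; apply: contrapT => qx; apply: (QM x Qx); exists x, 0%N; rewrite expr0 mulr1.
have [_ _ Qmax] := all_maximal primeQ.
case: (Qmax q idealq Qq) => [eqqQ|//].
by apply: (QM a); [exact/eqqQ | exists 1, 1%N; rewrite expr1 mul1r].
Qed.

Lemma basic_open_sub_V (q : Spec R) (g : seq R) :
  {in g, forall x, proj1_sig q x} ->
  exists s, ~ proj1_sig q s /\
    forall q' : Spec R, ~ proj1_sig q' s -> {in g, forall x, proj1_sig q' x}.
Proof.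
case: q => q primeq /=; elim: g => [|x g IHg] qg.
  by exists 1; split=> [|q' _ y]; [case: primeq | rewrite in_nil].
have /IHg[s [qs Ds]] : {in g, forall y, q y} by move=> y gy; apply: qg; rewrite inE gy orbT.
have [t [n [qt tx0]]] := prime_mem_annihilated primeq (qg x (mem_head x g)).
exists (s * t); split; first exact: prime_idealNM.
move=> [q' primeq'] /= q'st y; rewrite inE => /predU1P[->|gy].
- have [idealq' _ q'mul] := primeq'; apply: (prime_idealX (n := n) primeq').
  have : q' (t * x ^+ n) by rewrite tx0; case: idealq'.
  by case/q'mul => // q't; case: q'st; rewrite mulrC; apply: ideal_mulr.
- apply: (Ds (exist _ q' primeq')) => //= q's; apply: q'st.
  by apply: ideal_mulr => //; case: primeq'.
Qed.

Lemma flat_zariski_open (U : Spec R -> Prop) : flat_open U -> zariski_open U.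
Proof.
move=> flatU; exists (fun s => forall q : Spec R, ~ proj1_sig q s -> U q) => q; split.
- move=> Uq; have [I [_ [g Ig] VIq VIU]] := flatU q Uq.
  have Vgq : V (ideal_gen g) q by move=> y /Ig; apply: VIq.
  have [s [qs Ds]] := basic_open_sub_V ((V_ideal_gen g q).1 Vgq).
  move=> VSq; apply: qs; apply: VSq => q' q's; apply: VIU => y /Ig.
  exact: (V_ideal_gen g q').2 (Ds q' q's) y.
- by move/existsNP=> [s /not_implyP[Ss qs]]; exact: Ss q qs.
Qed.

End AllPrimesMaximal.

Theorem corollary4p8 (R : comPzRingType) :
  (forall U : Spec R -> Prop, zariski_open U <-> flat_open U) <->
  (forall P : R -> Prop, prime_ideal P -> maximal_ideal P).
Proof.
split=> [coincide | all_maximal U].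
- by apply: zariski_flat_prime_maximal => U /coincide.
- by split; [apply: zariski_flat_open | apply: flat_zariski_open].
Qed.
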